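(* For any hypergraph $\mathcal{H}=(V,E)$ (with $V=\bigcup_{e\in E}e$): (1) $\kappa(\mathcal{H})\ge \tau^*(\mathsf{red}(\mathcal{H}))$; (2) $\kappa(\mathcal{H})\ge \rho^*(\mathsf{red}(\mathcal{H}))=\rho^*(\mathcal{H})$; (3) $\kappa(\mathcal{H})\le \psi^*(\mathcal{H})$.
   Context: For $S\subseteq V$, $\mathcal{H}[S]$ is the hypergraph with vertex set $S$ and edge set $\{S\cap e : e\in E,\ S\cap e\neq\emptyset\}$. The reduced hypergraph $\mathsf{red}(\mathcal{H})$ has the same vertex set and is obtained by removing every edge $e$ for which there is another edge $e'\neq e$ with $e\subseteq e'$. $\tau^*(\mathcal{H})$ is the value of a maximum fractional edge packing (nonnegative edge weights with $\sum_{e\ni v}u_e\le1$ for every vertex $v$), equivalently of a minimum fractional vertex cover. $\rho^*(\mathcal{H})$ is the value of a minimum fractional edge cover (nonnegative edge weights with $\sum_{e\ni v}u_e\ge1$ for every vertex $v$). The reduced quasi vertex-cover is $\kappa(\mathcal{H})=\max_{S\subseteq V}\tau^*(\mathsf{red}(\mathcal{H}[S]))$, and the edge quasi-packing is $\psi^*(\mathcal{H})=\max_{S\subseteq V}\tau^*(\mathcal{H}[S])$. *)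

From mathcomp Require Import all_boot all_order all_algebra.
From mathcomp Require Import boolp classical_sets reals.
Set Implicit Arguments. Unset Strict Implicit. Unset Printing Implicit Defensive.
Import Order.TTheory GRing.Theory Num.Theory.
Local Open Scope ring_scope.
Local Open Scope classical_set_scope.

Section Hyp.
Variables (R : realType) (V : finType).

Definition induced (S : {set V}) (E : {set {set V}}) : {set {set V}} :=
  [set S :&: e | e in E & S :&: e != finset.set0].

Definition red (E : {set {set V}}) : {set {set V}} :=
  [set e in E | ~~ [exists e' in E, (e' != e) && (e \subset e')]].

Definition frac_packing (W : {set V}) (F : {set {set V}}) (u : {set V} -> R) :=
  (forall e, e \in F -> 0 <= u e) /\
  (forall v, v \in W -> \sum_(e in F | v \in e) u e <= 1).

Definition frac_cover (W : {set V}) (F : {set {set V}}) (u : {set V} -> R) :=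
  (forall e, e \in F -> 0 <= u e) /\
  (forall v, v \in W -> 1 <= \sum_(e in F | v \in e) u e).

Definition tau_star (W : {set V}) (F : {set {set V}}) : R :=
  sup [set x | exists u, frac_packing W F u /\ x = \sum_(e in F) u e].

Definition rho_star (W : {set V}) (F : {set {set V}}) : R :=
  inf [set x | exists u, frac_cover W F u /\ x = \sum_(e in F) u e].

(* kappa(H) = max_{S ⊆ V} tau^*(red(H[S])) ; all values are >= 0 *)
Definition kappa (W : {set V}) (E : {set {set V}}) : R :=
  \big[Num.max/0]_(S : {set V} | S \subset W) tau_star S (red (induced S E)).

Definition psi_star (W : {set V}) (E : {set {set V}}) : R :=
  \big[Num.max/0]_(S : {set V} | S \subset W) tau_star S (induced S E).

End Hyp.

From mathcomp Require Import all_boot all_order all_algebra.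
From mathcomp Require Import boolp classical_sets reals.
From mathcomp Require Import ring lra.
Import Order.TTheory GRing.Theory Num.Theory.
Local Open Scope ring_scope.

Set Implicit Arguments. Unset Strict Implicit. Unset Printing Implicit Defensive.

(* (1) is the term S = V of the maximum defining kappa, and (3) holds termwise
   since a fractional packing of red(H[S]) extends by zero to one of H[S].
   Replacing every edge by a maximal edge containing it turns a fractional
   edge cover of H into one of red(H) of the same value, whence
   rho*(red H) = rho*(H).  For (2), LP duality gives a fractional edge cover u
   and a fractional vertex packing y with sum u <= sum y; let S be the support
   of y.  By complementary slackness every edge e with u e > 0 is tight for y,
   so S :&: e is maximal in H[S], and u covers every vertex of S exactly once;
   hence pushing u forward along e |-> S :&: e gives a fractional packing of
   red(H[S]) of value sum u >= rho*(H).  LP duality is derived from Farkas'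
   lemma, which is proved by Fourier-Motzkin elimination. *)

Lemma sum_indicator (R : pzSemiRingType) (T : finType) (P : pred T) (F : T -> R) :
  \sum_s (P s)%:R * F s = \sum_(s | P s) F s.
Proof.
by rewrite [RHS]big_mkcond; apply: eq_bigr => s _; case: (P s); rewrite ?mul1r ?mul0r.
Qed.

Lemma sum_delta (R : pzSemiRingType) (T : finType) (t : T) (F : T -> R) :
  \sum_s (s == t)%:R * F s = F t.
Proof. by rewrite sum_indicator big_pred1_eq. Qed.

Lemma ler_sum_subpred (R : numDomainType) (T : finType) (P Q : pred T) (f : T -> R) :
  (forall t, P t -> Q t) -> (forall t, Q t -> 0 <= f t) ->
  \sum_(t | P t) f t <= \sum_(t | Q t) f t.
Proof.
move=> PQ f_ge0; rewrite [leLHS]big_mkcond [leRHS]big_mkcond; apply: ler_sum => t _.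
by case: (boolP (P t)) => [/PQ -> // | _]; case: ifP => // /f_ge0.
Qed.

(** * Farkas' lemma *)

Section Farkas.
Variables (R : realFieldType) (I : finType).

(* [(a, b)] stands for the linear inequality [\sum_i a i * x i <= b]. *)
Definition ineq := ((I -> R) * R)%type.

Implicit Types (D : {set I}) (x : I -> R) (c d : ineq).

Definition ineq_lhs D x c := \sum_(i in D) c.1 i * x i.

Definition satisfies D x c := ineq_lhs D x c <= c.2.

Definition ineq0 : ineq := (fun _ => 0, 0).
Definition ineq_add c d : ineq := (fun i => c.1 i + d.1 i, c.2 + d.2).
Definition ineq_scale (l : R) c : ineq := (fun i => l * c.1 i, l * c.2).

(* Only the coefficients of the variables in [D] are constrained: Fourier-Motzkin
   elimination removes the eliminated variables from [D]. *)
Inductive derivable (K : finType) (con : K -> ineq) (D : {set I}) : ineq -> Prop :=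
| derivable_con k : derivable con D (con k)
| derivable0 : derivable con D ineq0
| derivable_add c d :
    derivable con D c -> derivable con D d -> derivable con D (ineq_add c d)
| derivable_scale l c :
    0 <= l -> derivable con D c -> derivable con D (ineq_scale l c)
| derivable_weaken c d :
    derivable con D c -> {in D, d.1 =1 c.1} -> c.2 <= d.2 -> derivable con D d.

Lemma ineq_lhs_add D x c d :
  ineq_lhs D x (ineq_add c d) = ineq_lhs D x c + ineq_lhs D x d.
Proof. by rewrite /ineq_lhs -big_split; apply: eq_bigr => i _; rewrite mulrDl. Qed.

Lemma ineq_lhs_scale D x l c : ineq_lhs D x (ineq_scale l c) = l * ineq_lhs D x c.
Proof. by rewrite /ineq_lhs mulr_sumr; apply: eq_bigr => i _; rewrite mulrA. Qed.

Lemma derivable_combination (K : finType) (con : K -> ineq) D c :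
  derivable con D c ->
  exists2 lam : K -> R, (forall k, 0 <= lam k) &
    {in D, forall i, c.1 i = \sum_k lam k * (con k).1 i} /\
    \sum_k lam k * (con k).2 <= c.2.
Proof.
elim=> [k | | {}c d _ [l l0 [lc l2]] _ [m m0 [md m2]]
       | a {}c a0 _ [l l0 [lc l2]] | {}c d _ [l l0 [lc l2]] dc cd].
- exists (fun s => (s == k)%:R) => [s|]; first by rewrite ler0n.
  by split=> [i _|]; rewrite sum_delta.
- exists (fun=> 0) => //; split; last by rewrite big1 // => k; rewrite mul0r.
  by move=> i _; rewrite big1 // => k; rewrite mul0r.
- exists (fun k => l k + m k) => [k|]; first by rewrite addr_ge0.
  split=> [i iD|].
    by rewrite /= lc // md // -big_split; apply: eq_bigr => k; rewrite mulrDl.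
  rewrite /=; under eq_bigr do rewrite mulrDl.
  by rewrite big_split lerD.
- exists (fun k => a * l k) => [k|]; first by rewrite mulr_ge0.
  split=> [i iD|].
    by rewrite /= lc // mulr_sumr; apply: eq_bigr => k; rewrite mulrA.
  by under eq_bigr do rewrite -mulrA; rewrite -mulr_sumr ler_wpM2l.
- exists l => //; split=> [i iD|]; first by rewrite dc // lc.
  exact: le_trans cd.
Qed.

Lemma exists_between (K : finType) (P Q : pred K) (L U : K -> R) :
  (forall q p, P q -> Q p -> L q <= U p) ->
  exists t, (forall q, P q -> L q <= t) /\ (forall p, Q p -> t <= U p).
Proof.
move=> LU; case: (pickP P) => [q0 Pq0 | P0].
  have [q Pq qmax] := arg_maxP L Pq0.
  by exists (L q); split=> [q' /qmax | p /(LU q p Pq)].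
case: (pickP Q) => [p0 Qp0 | Q0]; last by exists 0; split=> [q | p]; rewrite ?P0 ?Q0.
have [p Qp pmin] := arg_minP U Qp0.
by exists (U p); split=> [q | p' /pmin]; rewrite ?P0.
Qed.

Section FourierMotzkin.
Variables (K : finType) (con : K -> ineq) (j : I).

Definition fm_combine p q : ineq :=
  ineq_add (ineq_scale (- (con q).1 j) (con p)) (ineq_scale ((con p).1 j) (con q)).

(* Elimination of the variable [j]: every pair of a lower and an upper bound
   on [x j] is combined, the inequalities not involving [x j] are kept along
   the diagonal, and all remaining pairs yield the trivial inequality. *)
Definition fm_elim (pq : K * K) : ineq :=
  if (0 < (con pq.1).1 j) && ((con pq.2).1 j < 0) then fm_combine pq.1 pq.2
  else if (pq.1 == pq.2) && ((con pq.1).1 j == 0) then con pq.1 else ineq0.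

Lemma fm_elim_derivable D pq : derivable con D (fm_elim pq).
Proof.
rewrite /fm_elim; case: ifP => [/andP [p_gt0 q_lt0] | _].
  by apply: derivable_add; apply: derivable_scale; rewrite ?oppr_ge0 ?ltW //;
     apply: derivable_con.
by case: ifP => _; [apply: derivable_con | apply: derivable0].
Qed.

Lemma fm_elim_coef pq : (fm_elim pq).1 j = 0.
Proof.
rewrite /fm_elim; case: ifP => [_ | _]; first by rewrite /=; ring.
by case: ifP => // /andP [_ /eqP].
Qed.

Lemma fm_elim_feasible D : j \in D ->
  (exists x, forall pq, satisfies (D :\ j) x (fm_elim pq)) ->
  exists x, forall k, satisfies D x (con k).
Proof.
move=> jD [x x_sol].
pose r k := ineq_lhs (D :\ j) x (con k).
pose bound k := ((con k).2 - r k) / (con k).1 j.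
have [t [t_lb t_ub]] : exists t, (forall q, (con q).1 j < 0 -> bound q <= t) /\
                                  (forall p, 0 < (con p).1 j -> t <= bound p).
  apply: exists_between => q p q_lt0 p_gt0.
  have := x_sol (p, q); rewrite /satisfies /fm_elim /= p_gt0 q_lt0 /=.
  rewrite ineq_lhs_add !ineq_lhs_scale /= -/(r p) -/(r q) => pq_sol.
  have pq_gt0 : 0 < (con p).1 j * - (con q).1 j by rewrite mulr_gt0 ?oppr_gt0.
  rewrite -subr_ge0 -(pmulr_rge0 _ pq_gt0).
  have -> : (con p).1 j * - (con q).1 j * (bound p - bound q) =
      - (con q).1 j * ((con p).2 - r p) + (con p).1 j * ((con q).2 - r q).
    by rewrite /bound; field; rewrite (lt_eqF q_lt0) (gt_eqF p_gt0).
  by rewrite !mulrBr; lra.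
exists (fun i => if i == j then t else x i) => k; rewrite /satisfies.
have -> : ineq_lhs D (fun i => if i == j then t else x i) (con k) =
    (con k).1 j * t + r k.
  rewrite /ineq_lhs (big_setD1 j) //= eqxx; congr (_ + _).
  by apply: eq_bigr => i; rewrite in_setD1 => /andP [/negbTE ->].
case: (ltgtP ((con k).1 j) 0) => [k_lt0 | k_gt0 | k0].
- by have := t_lb k k_lt0; rewrite /bound ler_ndivrMr // mulrC; lra.
- by have := t_ub k k_gt0; rewrite /bound ler_pdivlMr // mulrC; lra.
- have := x_sol (k, k); rewrite /satisfies /fm_elim /= k0 ltxx !eqxx /=.
  by rewrite mul0r add0r.
Qed.

Lemma fm_elim_derivable_lift D c : j \in D ->
  derivable fm_elim (D :\ j) c ->
  exists2 c', derivable con D c' &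
    [/\ {in D :\ j, c'.1 =1 c.1}, c'.1 j = 0 & c'.2 = c.2].
Proof.
move=> jD; elim=> [pq | | {}c d _ [c' c'D [cc' c'j c'2]] _ [d' d'D [dd' d'j d'2]]
       | l {}c l0 _ [c' c'D [cc' c'j c'2]] | {}c d _ [c' c'D [cc' c'j c'2]] dc cd].
- by exists (fm_elim pq); [apply: fm_elim_derivable | split=> //; apply: fm_elim_coef].
- by exists ineq0; [apply: derivable0 | split].
- exists (ineq_add c' d'); first exact: derivable_add.
  by split=> [i iD | |]; rewrite /ineq_add /= ?c'j ?d'j ?addr0 ?c'2 ?d'2 // cc' ?dd'.
- exists (ineq_scale l c'); first exact: derivable_scale.
  by split=> [i iD | |]; rewrite /ineq_scale /= ?c'j ?mulr0 ?c'2 // cc'.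
- exists (fun i => if i == j then 0 else d.1 i, d.2).
    apply: (derivable_weaken c'D) => [i iD|] /=; last by rewrite c'2.
    case: eqP => [-> // | /eqP ij].
    by rewrite dc ?cc' // in_setD1 ij.
  split=> [i | |] /=; rewrite ?eqxx //.
  by rewrite in_setD1 => /andP [/negbTE ->].
Qed.

End FourierMotzkin.

Lemma farkas_derivation (K : finType) (con : K -> ineq) D :
  ~ (exists x, forall k, satisfies D x (con k)) ->
  exists2 c, derivable con D c & {in D, c.1 =1 (fun=> 0)} /\ c.2 < 0.
Proof.
move Dn: #|D| => n; elim: n K con D Dn => [|n IH] K con D Dn infeasible.
  have D0 : D = finset.set0 by apply/eqP; rewrite -cards_eq0 Dn.
  case: (pickP (fun k => (con k).2 < 0)) => [k k_neg | rhs_ge0].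
    by exists (con k); [apply: derivable_con | split=> // i; rewrite D0 inE].
  case: infeasible; exists (fun=> 0) => k.
  by rewrite /satisfies /ineq_lhs D0 big_set0 leNgt rhs_ge0.
have [j jD] : exists j, j \in D by apply/set0Pn; rewrite -cards_eq0 Dn.
have Djn : #|D :\ j| = n by move: Dn; rewrite (cardsD1 j) jD add1n => -[].
have elim_infeasible : ~ exists x, forall pq, satisfies (D :\ j) x (fm_elim con j pq).
  by move/(fm_elim_feasible jD).
have [c c_der [c0 c_neg]] := IH _ _ _ Djn elim_infeasible.
have [c' c'_der [cc' c'j c'2]] := fm_elim_derivable_lift jD c_der.
exists c' => //; split; last by rewrite c'2.
move=> i iD; case: (eqVneq i j) => [-> // | ij].
by rewrite cc' ?c0 // in_setD1 ij.
Qed.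

Lemma farkas (K : finType) (con : K -> ineq) D :
  ~ (exists x, forall k, satisfies D x (con k)) ->
  exists2 lam : K -> R, (forall k, 0 <= lam k) &
    {in D, forall i, \sum_k lam k * (con k).1 i = 0} /\
    \sum_k lam k * (con k).2 < 0.
Proof.
move=> /farkas_derivation [c /derivable_combination [lam lam0 [c_comb c_rhs]] [c0 c_neg]].
exists lam => //; split=> [i iD | ]; first by rewrite -c_comb ?c0.
exact: le_lt_trans c_neg.
Qed.

Lemma ineq_lhsT x c : ineq_lhs [set: I] x c = \sum_i c.1 i * x i.
Proof. by apply: eq_bigl => i; rewrite inE. Qed.

Lemma farkas_nonneg (K : finType) (con : K -> ineq) :
  ~ (exists2 x, (forall i, 0 <= x i) & forall k, satisfies [set: I] x (con k)) ->
  exists2 lam : K -> R, (forall k, 0 <= lam k) &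
    (forall i, 0 <= \sum_k lam k * (con k).1 i) /\ \sum_k lam k * (con k).2 < 0.
Proof.
pose con' (k : K + I) : ineq :=
  match k with inl k => con k | inr i => (fun i' => - (i' == i)%:R, 0) end.
move=> infeasible.
have [lam lam0 [lam_coef lam_rhs]] : exists2 lam : K + I -> R, (forall k, 0 <= lam k) &
    {in [set: I], forall i, \sum_k lam k * (con' k).1 i = 0} /\
    \sum_k lam k * (con' k).2 < 0.
  apply: farkas => -[x x_sol]; apply: infeasible.
  exists x => [i | k]; last exact: x_sol (inl k).
  have := x_sol (inr i); rewrite /satisfies ineq_lhsT /=.
  by under eq_bigr do rewrite mulNr; rewrite sumrN sum_delta oppr_le0.
exists (lam \o inl) => [k | ]; first exact: lam0.
split=> [i | ].
  have := lam_coef i (finset.in_setT i); rewrite big_sumType /=.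
  under [X in _ + X]eq_bigr do rewrite mulrN mulrC eq_sym.
  by rewrite sumrN sum_delta => /eqP; rewrite subr_eq0 => /eqP ->.
move: lam_rhs; rewrite big_sumType /= [X in _ + X]big1 ?addr0 // => i _.
by rewrite mulr0.
Qed.

End Farkas.

(** * Linear programming duality *)

Section LPDuality.
Variables (R : realFieldType) (I K : finType) (A : K -> I -> R).

Definition primal_feasible (b : K -> R) (x : I -> R) :=
  (forall i, 0 <= x i) /\ (forall k, \sum_i A k i * x i <= b k).

Definition dual_feasible (c : I -> R) (y : K -> R) :=
  (forall k, 0 <= y k) /\ (forall i, c i <= \sum_k A k i * y k).

Lemma sum_swap (x : I -> R) (y : K -> R) :
  \sum_k y k * \sum_i A k i * x i = \sum_i x i * \sum_k A k i * y k.
Proof.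
under eq_bigr do rewrite mulr_sumr; rewrite exchange_big /=.
by apply: eq_bigr => i _; rewrite mulr_sumr; apply: eq_bigr => k _; ring.
Qed.

Lemma weak_duality b c x y : primal_feasible b x -> dual_feasible c y ->
  \sum_i c i * x i <= \sum_k b k * y k.
Proof.
move=> [x0 Ax_le] [y0 Ay_ge].
apply: (@le_trans _ _ (\sum_i x i * \sum_k A k i * y k)).
  by apply: ler_sum => i _; rewrite mulrC ler_wpM2l.
by rewrite -sum_swap; apply: ler_sum => k _; rewrite [b k * _]mulrC ler_wpM2l.
Qed.

Lemma weak_duality_homogeneous b c x0 y0 l g (t : R) :
  primal_feasible b x0 -> dual_feasible c y0 -> 0 <= t ->
  primal_feasible (fun k => t * b k) g -> dual_feasible (fun i => t * c i) l ->
  \sum_i c i * g i <= \sum_k b k * l k.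
Proof.
move=> x0_feas y0_feas t_ge0 g_primal l_dual; rewrite leNgt; apply/negP => gap.
have t0 : t = 0.
  have := weak_duality g_primal l_dual.
  under eq_bigr do rewrite -mulrA; under [X in _ <= X]eq_bigr do rewrite -mulrA.
  rewrite -!mulr_sumr; apply: contraTeq => t_neq0.
  by rewrite -ltNge ltr_pM2l // lt_def t_neq0.
have cg_le0 : \sum_i c i * g i <= 0.
  have := weak_duality g_primal y0_feas; rewrite t0 [X in _ <= X]big1 //.
  by move=> k _; rewrite !mul0r.
have bl_ge0 : 0 <= \sum_k b k * l k.
  have := weak_duality x0_feas l_dual; rewrite t0 [X in X <= _]big1 //.
  by move=> i _; rewrite !mul0r.
lra.
Qed.

Lemma strong_duality b c x0 y0 : primal_feasible b x0 -> dual_feasible c y0 ->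
  exists x y, [/\ primal_feasible b x, dual_feasible c y &
                  \sum_k b k * y k <= \sum_i c i * x i].
Proof.
move=> x0_feas y0_feas; apply: contrapT => no_optimum.
pose pack (f : I -> R) (g : K -> R) (z : I + K) :=
  match z with inl i => f i | inr k => g k end.
have sum_pack f g w :
    \sum_z pack f g z * w z = \sum_i f i * w (inl i) + \sum_k g k * w (inr k).
  by rewrite big_sumType.
(* Variables [inl i] and [inr k] stand for [x i] and [y k]; the three blocks of
   constraints are primal feasibility, dual feasibility and [b . y <= c . x]. *)
pose con (r : K + I + unit) : ineq R (I + K)%type := match r with
  | inl (inl k) => (pack (A k) (fun=> 0), b k)
  | inl (inr i) => (pack (fun=> 0) (fun k => - A k i), - c i)
  | inr _ => (pack (fun i => - c i) b, 0) end.
have infeasible : ~ exists2 z, (forall v, 0 <= z v) &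
    forall r, satisfies [set: I + K] z (con r).
  move=> [z z0 z_sol]; apply: no_optimum; exists (z \o inl), (z \o inr).
  split=> [ | | ].
  - split=> [i | k] /=; first exact: z0.
    have := z_sol (inl (inl k)); rewrite /satisfies ineq_lhsT sum_pack /=.
    by rewrite [X in _ + X]big1 ?addr0 // => k' _; rewrite mul0r.
  - split=> [k | i] /=; first exact: z0.
    have := z_sol (inl (inr i)); rewrite /satisfies ineq_lhsT sum_pack /=.
    rewrite big1 ?add0r => [| i' _]; last by rewrite mul0r.
    by under eq_bigr do rewrite mulNr; rewrite sumrN lerN2.
  - have := z_sol (inr tt); rewrite /satisfies ineq_lhsT sum_pack /=.
    by under eq_bigr do rewrite mulNr; rewrite sumrN addrC subr_le0.
have [lam lam0 [lam_coef lam_rhs]] := farkas_nonneg infeasible.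
have sum_con (w : K + I + unit -> R) : \sum_r w r =
    \sum_k w (inl (inl k)) + \sum_i w (inl (inr i)) + w (inr tt).
  by rewrite !big_sumType (big_pred1 tt) //; case.
pose l k := lam (inl (inl k)); pose g i := lam (inl (inr i)); pose t := lam (inr tt).
have l_dual : dual_feasible (fun i => t * c i) l.
  split=> [k | i]; first exact: lam0.
  have := lam_coef (inl i); rewrite sum_con /= [X in _ + X + _]big1 => [| i' _].
    by rewrite addr0 mulrN subr_ge0; under eq_bigr do rewrite mulrC.
  by rewrite mulr0.
have g_primal : primal_feasible (fun k => t * b k) g.
  split=> [i | k]; first exact: lam0.
  have := lam_coef (inr k); rewrite sum_con /= big1 ?add0r => [| k' _]; last first.
    by rewrite mulr0.
  under eq_bigr do rewrite mulrN.
  by rewrite sumrN addrC subr_ge0; under eq_bigr do rewrite mulrC.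
have := weak_duality_homogeneous x0_feas y0_feas (lam0 _) g_primal l_dual.
under eq_bigr do rewrite mulrC; under [X in _ <= X]eq_bigr do rewrite mulrC.
move: lam_rhs; rewrite sum_con /= mulr0 addr0.
by under [X in _ + X]eq_bigr do rewrite mulrN; rewrite sumrN subr_lt0 ltNge => /negP.
Qed.

End LPDuality.

(** * Fractional covers and packings of hypergraphs *)

Section Hypergraph.
Variables (R : realType) (V : finType).
Implicit Types (W S e g : {set V}) (E F G : {set {set V}}) (u : {set V} -> R).

Definition edges_meet W F := forall e, e \in F -> exists2 v, v \in W & v \in e.

Lemma frac_packing_le W F u : edges_meet W F -> frac_packing W F u ->
  \sum_(e in F) u e <= #|F|%:R.
Proof.
move=> meet [u_ge0 u_pack]; rewrite -sum1_card natr_sum; apply: ler_sum => e eF.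
have [v vW ve] := meet e eF; apply: le_trans (u_pack v vW).
rewrite (bigD1 e) /=; last by rewrite eF ve.
by rewrite lerDl sumr_ge0 // => f /andP [/andP [fF _] _]; apply: u_ge0.
Qed.

Lemma frac_packing0 W F : frac_packing W F (fun=> 0 : R).
Proof. by split=> // v _; rewrite big1. Qed.

Lemma tau_star_ge W F u : edges_meet W F -> frac_packing W F u ->
  \sum_(e in F) u e <= tau_star R W F.
Proof.
move=> meet u_pack; apply: ub_le_sup; last by exists u.
by exists #|F|%:R => _ [u' [u'_pack ->]]; apply: frac_packing_le meet u'_pack.
Qed.

Lemma tau_star_le W F (x : R) :
  (forall u, frac_packing W F u -> \sum_(e in F) u e <= x) -> tau_star R W F <= x.
Proof.
move=> x_ub; apply: ge_sup => [|_ [u [u_pack ->]]]; last exact: x_ub.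
by exists 0, (fun=> 0); split; [apply: frac_packing0 | rewrite big1].
Qed.

Lemma rho_star_le W F u : frac_cover W F u -> rho_star R W F <= \sum_(e in F) u e.
Proof.
move=> u_cover; apply: ge_inf; last by exists u.
by exists 0 => _ [u' [[u'_ge0 _] ->]]; apply: sumr_ge0.
Qed.

Lemma rho_star_ge W F (x : R) : (exists u, frac_cover W F u) ->
  (forall u, frac_cover W F u -> x <= \sum_(e in F) u e) -> x <= rho_star R W F.
Proof.
move=> [u u_cover] x_lb; apply: lb_le_inf => [|_ [u' [u'_cover ->]]]; last exact: x_lb.
by exists (\sum_(e in F) u e), u.
Qed.

Definition extend0 F u e := if e \in F then u e else 0.

Lemma sum_extend0 F G u (P : pred {set V}) : G \subset F ->
  \sum_(e in F | P e) extend0 G u e = \sum_(e in G | P e) u e.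
Proof.
move=> GF; rewrite -big_mkcondr; apply: eq_bigl => e.
by case: (boolP (e \in G)) => [/(fintype.subsetP GF) -> | _]; rewrite ?andbT ?andbF.
Qed.

Lemma tau_star_subset W F G : G \subset F -> edges_meet W F ->
  tau_star R W G <= tau_star R W F.
Proof.
move=> GF meet; apply: tau_star_le => u [u_ge0 u_pack].
rewrite -big_condT -(sum_extend0 _ _ GF) big_condT; apply: tau_star_ge => //.
split=> [e _ | v vW]; first by rewrite /extend0; case: ifP => // /u_ge0.
by rewrite sum_extend0 // u_pack.
Qed.

Lemma rho_star_subset W F G : G \subset F -> (exists u, frac_cover W G u) ->
  rho_star R W F <= rho_star R W G.
Proof.
move=> GF coverable; apply: rho_star_ge => // u [u_ge0 u_cover].
rewrite -big_condT -(sum_extend0 _ _ GF) big_condT; apply: rho_star_le.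
split=> [e _ | v vW]; first by rewrite /extend0; case: ifP => // /u_ge0.
by rewrite sum_extend0 // u_cover.
Qed.

Lemma red_sub F : red F \subset F.
Proof. by apply/fintype.subsetP => e; rewrite inE => /andP []. Qed.

Lemma red_max F e : e \in F -> exists2 e', e' \in red F & e \subset e'.
Proof.
move=> eF; have eFe : (e \in F) && (e \subset e) by rewrite eF subxx.
have [e' /andP [e'F ee'] e'_max] :=
  @arg_maxnP _ e (fun f => (f \in F) && (e \subset f)) (fun f => #|f|) eFe.
exists e' => //; rewrite inE e'F; apply/negP => /existsP [f /andP [fF /andP [fe' e'f]]].
have e'_ge : (#|f| <= #|e'|)%N.
  by apply: e'_max; rewrite fF (fintype.subset_trans ee' e'f).
by move: fe'; rewrite eq_sym eqEcard e'f e'_ge.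
Qed.

Definition red_up F (e : {set V}) := odflt e [pick e' in red F | e \subset e'].

Lemma red_upP F e : e \in F -> red_up F e \in red F /\ e \subset red_up F e.
Proof.
move=> eF; rewrite /red_up; case: pickP => [e' /andP [] // | none].
by have [e' e'_red ee'] := red_max eF; move: (none e'); rewrite e'_red ee'.
Qed.

Definition pushforward F (f : {set V} -> {set V}) u g := \sum_(e in F | f e == g) u e.

Lemma sum_pushforward F G f u (P : pred {set V}) : {in F, forall e, f e \in G} ->
  \sum_(g in G | P g) pushforward F f u g = \sum_(e in F | P (f e)) u e.
Proof.
move=> fF; symmetry; rewrite (partition_big f (fun g => (g \in G) && P g)) /=; last first.
  by move=> e /andP [eF Pfe]; rewrite fF.
apply: eq_bigr => g /andP [_ Pg]; apply: eq_bigl => e.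
by case: eqP => [-> | _]; rewrite ?Pg ?andbT ?andbF.
Qed.

Lemma pushforward_ge0 F f u : (forall e, e \in F -> 0 <= u e) ->
  forall g, 0 <= pushforward F f u g.
Proof. by move=> u_ge0 g; apply: sumr_ge0 => e /andP [/u_ge0]. Qed.

Lemma frac_cover1 W F : (forall v, v \in W -> exists2 e, e \in F & v \in e) ->
  frac_cover W F (fun=> 1 : R).
Proof.
move=> covered; split=> // v vW; have [e eF ve] := covered v vW.
by rewrite (bigD1 e) /= ?eF ?ve // lerDl sumr_ge0.
Qed.

Lemma rho_star_red W E : (forall v, v \in W -> exists2 e, e \in E & v \in e) ->
  rho_star R W (red E) = rho_star R W E.
Proof.
move=> covered; have red_covered v : v \in W -> exists2 e, e \in red E & v \in e.
  move=> /covered [e eE ve]; have [e' e'_red /fintype.subsetP ee'] := red_max eE.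
  by exists e'; rewrite // ee'.
have coverable : exists u, frac_cover W (red E) u by exists (fun=> 1); apply: frac_cover1.
apply/eqP; rewrite eq_le (rho_star_subset (red_sub E) coverable) andbT.
apply: rho_star_ge => [|u [u_ge0 u_cover]]; first by exists (fun=> 1); apply: frac_cover1.
have up_red e : e \in E -> red_up E e \in red E by case/red_upP.
rewrite -big_condT -(sum_pushforward u xpredT up_red) big_condT; apply: rho_star_le.
split=> [g _ | v vW]; first exact: pushforward_ge0.
rewrite sum_pushforward //; apply: le_trans (u_cover v vW) _.
apply: ler_sum_subpred => [e /andP [eE ve] | e /andP [/u_ge0 //]].
by rewrite eE; have [_ /fintype.subsetP ->] := red_upP eE.
Qed.

Lemma mem_induced S E e : e \in E -> S :&: e != finset.set0 -> S :&: e \in induced S E.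
Proof. by move=> eE Se; apply/imsetP; exists e; rewrite // inE eE. Qed.

Lemma induced_edges_meet S E : edges_meet S (induced S E).
Proof.
move=> f /imsetP [e]; rewrite inE => /andP [_ /set0Pn [v]].
by rewrite inE => /andP [vS ve] ->; exists v; rewrite // inE vS.
Qed.

Lemma inducedT E : finset.set0 \notin E -> induced [set: V] E = E.
Proof.
move=> E0; apply/setP => e; apply/imsetP/idP => [[e']|eE].
  by rewrite inE finset.setTI => /andP [e'E _] ->.
exists e; last by rewrite finset.setTI.
by rewrite inE eE finset.setTI; apply: contraNneq E0 => <-.
Qed.

Definition incidence E e v : R := ((e \in E) && (v \in e))%:R.

Lemma sum_incidence_edges E v u :
  \sum_e incidence E e v * u e = \sum_(e in E | v \in e) u e.
Proof. exact: sum_indicator. Qed.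

Lemma sum_incidence_vertices E e (y : V -> R) :
  \sum_v incidence E e v * y v = (e \in E)%:R * \sum_(v in e) y v.
Proof.
rewrite sum_indicator; case: (e \in E); first by rewrite mul1r.
by rewrite mul0r big_pred0.
Qed.

Lemma cover_packing_duality E : (forall v, exists2 e, e \in E & v \in e) ->
  exists u (y : V -> R), [/\ (forall e, 0 <= u e), (forall v, 0 <= y v),
    (forall v, 1 <= \sum_(e in E | v \in e) u e),
    (forall e, e \in E -> \sum_(v in e) y v <= 1)
    & \sum_(e in E) u e <= \sum_v y v].
Proof.
move=> covered; pose b e : R := (e \in E)%:R.
have zero_feasible : primal_feasible (incidence E) b (fun=> 0).
  by split=> // e; rewrite big1 ?ler0n // => v _; rewrite mulr0.
have one_feasible : dual_feasible (incidence E) (fun=> 1) (fun=> 1).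
  split=> // v; rewrite sum_incidence_edges.
  by have [_ ->] := frac_cover1 (W := [set: V]) (fun v _ => covered v).
have [y [u [[y_ge0 y_pack] [u_ge0 u_cover] u_le_y]]] :=
  strong_duality zero_feasible one_feasible.
exists u, y; split=> // [v | e eE |].
- by have := u_cover v; rewrite sum_incidence_edges.
- by have := y_pack e; rewrite sum_incidence_vertices /b eE mul1r.
- by move: u_le_y; rewrite sum_indicator; under [X in _ <= X]eq_bigr do rewrite mul1r.
Qed.

Lemma complementary_slackness E u (y : V -> R) :
  (forall e, 0 <= u e) -> (forall v, 0 <= y v) ->
  (forall v, 1 <= \sum_(e in E | v \in e) u e) ->
  (forall e, e \in E -> \sum_(v in e) y v <= 1) ->
  \sum_(e in E) u e <= \sum_v y v ->
  (forall e, e \in E -> u e != 0 -> \sum_(v in e) y v = 1) /\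
  (forall v, y v != 0 -> \sum_(e in E | v \in e) u e = 1).
Proof.
move=> u_ge0 y_ge0 u_cover y_pack u_le_y.
have swap : \sum_(e in E) u e * \sum_(v in e) y v =
    \sum_v y v * \sum_(e in E | v \in e) u e.
  have := sum_swap (incidence E) y u; under [RHS]eq_bigr do rewrite sum_incidence_edges.
  move=> <-; rewrite -sum_indicator; apply: eq_bigr => e _.
  by rewrite sum_incidence_vertices mulrCA.
set slack_e := \sum_(e in E) u e * (1 - \sum_(v in e) y v).
set slack_v := \sum_v y v * (\sum_(e in E | v \in e) u e - 1).
have slack_e_ge0 e : e \in E -> 0 <= u e * (1 - \sum_(v in e) y v).
  by move=> eE; rewrite mulr_ge0 ?subr_ge0 ?y_pack.
have slack_v_ge0 v : true -> 0 <= y v * (\sum_(e in E | v \in e) u e - 1).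
  by move=> _; rewrite mulr_ge0 ?subr_ge0.
have slack_sum : slack_e + slack_v = \sum_(e in E) u e - \sum_v y v.
  rewrite /slack_e /slack_v; under eq_bigr do rewrite mulrBr mulr1.
  by under [X in _ + X]eq_bigr do rewrite mulrBr mulr1; rewrite !sumrB swap; ring.
have sum_e_ge0 : 0 <= slack_e by apply: sumr_ge0.
have sum_v_ge0 : 0 <= slack_v by apply: sumr_ge0.
have [slack_e0 slack_v0] : slack_e = 0 /\ slack_v = 0.
  by move: slack_sum u_le_y sum_e_ge0 sum_v_ge0; clearbody slack_e slack_v; lra.
split=> [e eE ue | v yv].
  have /eqP := psumr_eq0P slack_e_ge0 slack_e0 eE.
  by rewrite mulf_eq0 (negbTE ue) /= subr_eq0 => /eqP <-.
have /eqP := psumr_eq0P slack_v_ge0 slack_v0 (i := v) isT.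
by rewrite mulf_eq0 (negbTE yv) /= subr_eq0 => /eqP.
Qed.

Lemma setI_tight_in_red S E e (y : V -> R) : e \in E ->
  (forall v, 0 <= y v) -> (forall v, v \in S -> 0 < y v) ->
  (forall f, f \in E -> \sum_(v in S :&: f) y v <= 1) ->
  \sum_(v in S :&: e) y v = 1 -> S :&: e \in red (induced S E).
Proof.
move=> eE y_ge0 y_pos y_pack e_tight.
have Se0 : S :&: e != finset.set0.
  apply/eqP => Se0; move: e_tight; rewrite Se0 big_set0 => /eqP.
  by rewrite eq_sym oner_eq0.
rewrite inE mem_induced //=; apply/negP => /existsP [g /and3P [gI g_neq g_sup]].
move: gI => /imsetP [f]; rewrite inE => /andP [fE _] gSf.
have /properP [_ [w wg wSe]] : S :&: e \proper g.
  by rewrite finset.properEneq eq_sym g_neq g_sup.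
have wS : w \in S by move: wg; rewrite gSf finset.in_setI => /andP [].
have : 1 < \sum_(v in g) y v.
  rewrite (big_setID (S :&: e)) /= (finset.setIidPr g_sup) e_tight ltrDl (bigD1 w) /=.
    by rewrite ltr_pwDl ?y_pos // sumr_ge0.
  by rewrite finset.in_setD wSe.
by rewrite gSf ltNge y_pack.
Qed.

Lemma rho_star_le_tau_star_red_induced E : (forall v, exists2 e, e \in E & v \in e) ->
  exists S, rho_star R [set: V] E <= tau_star R S (red (induced S E)).
Proof.
move=> covered.
have [u [y [u_ge0 y_ge0 u_cover y_pack u_le_y]]] := cover_packing_duality covered.
have [tight loose] := complementary_slackness u_ge0 y_ge0 u_cover y_pack u_le_y.
pose S := [set v | y v != 0].
have y_pos v : v \in S -> 0 < y v by rewrite inE lt_def => ->; apply: y_ge0.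
have sum_S e : \sum_(v in e) y v = \sum_(v in S :&: e) y v.
  rewrite (big_setID S) /= finset.setIC [X in _ + X]big1 ?addr0 // => v.
  by rewrite !inE => /andP [/negPn /eqP].
pose supp := [set e in E | u e != 0].
have supp_red e : e \in supp -> S :&: e \in red (induced S E).
  rewrite inE => /andP [eE ue]; apply: setI_tight_in_red y_ge0 y_pos _ _ => // [f fE|].
    by rewrite -sum_S y_pack.
  by rewrite -sum_S tight.
have sum_supp (P : pred {set V}) : \sum_(e in supp | P e) u e = \sum_(e in E | P e) u e.
  rewrite [RHS](bigID (fun e => u e != 0)) /= [X in _ + X]big1 ?addr0.
    by apply: eq_bigl => e; rewrite inE andbAC.
  by move=> e /andP [_ /negPn /eqP].
exists S; apply: (@le_trans _ _ (\sum_(e in E) u e)); first exact: rho_star_le.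
rewrite -big_condT -sum_supp -(sum_pushforward u xpredT supp_red) big_condT.
apply: tau_star_ge.
  by move=> g /(fintype.subsetP (red_sub _)); apply: induced_edges_meet.
split=> [g _ | v vS]; first by apply: pushforward_ge0 => e _.
rewrite sum_pushforward // -(loose v); last by move: vS; rewrite inE.
by rewrite -sum_supp; under eq_bigl do rewrite finset.in_setI vS.
Qed.

End Hypergraph.

Unset Implicit Arguments.

Theorem lemma3p6 (R : realType) (V : finType) (E : {set {set V}})
  (hE0 : finset.set0 \notin E)
  (hV : \bigcup_(e in E) e = [set: V]) :
  let W := [set: V] in
  [/\ tau_star R W (red E) <= kappa R W E,
      rho_star R W (red E) <= kappa R W E,
      rho_star R W (red E) = rho_star R W E
    & kappa R W E <= psi_star R W E].
Proof.
move=> W.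
have covered v : exists2 e, e \in E & v \in e.
  have /bigcupP [e eE ve] : v \in \bigcup_(e in E) e by rewrite hV inE.
  by exists e.
have kappa_ge S : tau_star R S (red (induced S E)) <= kappa R W E.
  exact: (@le_bigmax_cond _ _ _ 0 S) (finset.subsetT S).
have rho_red : rho_star R W (red E) = rho_star R W E.
  by apply: rho_star_red => v _; apply: covered.
have [S rho_le] := rho_star_le_tau_star_red_induced R covered.
split=> //.
- by rewrite -{1}(inducedT hE0); apply: kappa_ge.
- by rewrite rho_red (le_trans rho_le (kappa_ge S)).
- apply: le_bigmax2 => T _.
  exact: tau_star_subset (red_sub _) (@induced_edges_meet _ T E).
Qed.
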